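(* Let $k$ be a constant and let $D$ be the derivation (linear, satisfying the Leibniz rule, killing constants) on polynomials in the commuting variables $I,x,y$ determined by $D(I)=I(x+y)$, $D(x)=2kxy$, $D(y)=2kxy$. Then for $n\ge1$, $$D^n(I)=I\sum_{w\in B_n}x^{\mathrm{wexc}(w)}y^{\mathrm{aexc}(w)}k^{n-\mathrm{cyc}(w)}.$$
   Context: $B_n$ is the hyperoctahedral group of signed permutations $w$ of $\pm[n]$ with $w(-i)=-w(i)$, written in standard cycle decomposition (each cycle starts with its element of largest absolute value, cycles ordered by increasing absolute value of first elements); $\mathrm{cyc}(w)$ is the number of cycles. An index $i\in[n]$ is a weak excedance if $w(i)=i$ or $w(|w(i)|)>w(i)$, and an anti-excedance if $w(i)=-i$ or $w(|w(i)|)<w(i)$; $\mathrm{wexc}(w)$, $\mathrm{aexc}(w)$ denote their numbers. *)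

From mathcomp Require Import all_boot all_order all_algebra all_fingroup.
From mathcomp Require Import mpoly.
Set Implicit Arguments. Unset Strict Implicit. Unset Printing Implicit Defensive.
Import GRing.Theory Num.Theory.
Local Open Scope ring_scope.

(* A signed permutation w of ±[n] (with
   w(-i) = -w(i)) is encoded by the pair (s, e) with s : {perm 'I_n} and
   e : {ffun 'I_n -> bool}: the index i : 'I_n stands for the element i+1
   of [n], and w(i+1) = (-1)^(e i) * (s i + 1). *)
Definition signed_perm (n : nat) : finType :=
  ({perm 'I_n} * {ffun 'I_n -> bool})%type.

Definition sp_val n (w : signed_perm n) (i : 'I_n) : int :=
  let v := ((w.1 i).+1)%:Z in if w.2 i then - v else v.

(* |w(i+1)| is (w.1 i) + 1, i.e. the index w.1 i; so w(|w(i)|) is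
   sp_val w (w.1 i). *)
Definition is_wexc n (w : signed_perm n) (i : 'I_n) : bool :=
  (sp_val w i == (i.+1)%:Z) || (sp_val w i < sp_val w (w.1 i)).

Definition is_aexc n (w : signed_perm n) (i : 'I_n) : bool :=
  (sp_val w i == - (i.+1)%:Z) || (sp_val w (w.1 i) < sp_val w i).

Definition wexc n (w : signed_perm n) : nat := #|[set i | is_wexc w i]|.
Definition aexc n (w : signed_perm n) : nat := #|[set i | is_aexc w i]|.

(* Number of cycles in the standard cycle decomposition of w: the cycles of
   the underlying permutation |w| : i |-> |w(i)| of [n]. *)
Definition cyc n (w : signed_perm n) : nat := #|porbits w.1|.

(* D is a derivation of the polynomial ring R[I,x,y] (variables 'X_0,'X_1,'X_2) *)
Definition is_derivation (R : comRingType)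
    (D : {mpoly R[3]} -> {mpoly R[3]}) : Prop :=
  [/\ (forall p q, D (p + q) = D p + D q),
      (forall (c : R) p, D (c *: p) = c *: D p),
      (forall p q, D (p * q) = D p * q + p * D q) &
      (forall c : R, D c%:MP = 0)].

(* Every signed permutation of [n+1] arises exactly once from one of [n] by
   letting n+1 either form a new fixed cycle, or be inserted into a cycle of
   |w| right after some i, with either sign.  A new fixed cycle multiplies the
   weight x^wexc y^aexc k^(n - cyc) by x or by y; an insertion keeps the number
   of cycles and multiplies the weight by k y or by k x, according as the
   predecessor of i in its cycle is a weak excedance or not.  Summing,
   P_(n+1) = (x + y) P_n + D P_n, since D (x^a y^b) = 2k x^a y^b (a y + b x)
   and D k = 0.  As D (I P) = I ((x + y) P + D P), the polynomials I P_n obey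
   the recursion of D^n I. *)

From mathcomp Require Import all_boot all_order all_algebra all_fingroup.
From mathcomp Require Import mpoly zify ring.
Import GRing.Theory.
Local Open Scope ring_scope.
Set Implicit Arguments. Unset Strict Implicit.

Lemma sum_option (M : nmodType) (I : finType) (F : option I -> M) :
  \sum_(o : option I) F o = F None + \sum_(i : I) F (Some i).
Proof.
rewrite (bigD1 None) //=; congr (_ + _).
rewrite (reindex_omap Some id) /=; last by case.
by apply: eq_bigl => i; rewrite eqxx.
Qed.

Lemma sum_pair (M : nmodType) (I J : finType) (F : I * J -> M) :
  \sum_(p : I * J) F p = \sum_(i : I) \sum_(j : J) F (i, j).
Proof. by rewrite pair_bigA; apply: eq_bigr => -[]. Qed.

Section Excedances.
Variables (n : nat) (w : signed_perm n).

Lemma sp_val_pm i : (sp_val w i == (w.1 i).+1%:Z) || (sp_val w i == - (w.1 i).+1%:Z).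
Proof. by rewrite /sp_val; case: (w.2 i); rewrite eqxx ?orbT. Qed.

Lemma is_aexcE i : is_aexc w i = ~~ is_wexc w i.
Proof.
rewrite /is_aexc /is_wexc /sp_val.
have [fix_i|nfix_i] := eqVneq (w.1 i) i.
  by rewrite fix_i; move/(congr1 val): fix_i => /= fix_i; case: (w.2 i); lia.
have : w.1 (w.1 i) != w.1 i by apply: contra nfix_i => /eqP/perm_inj ->.
move: nfix_i; rewrite -!(inj_eq val_inj) /=; case: (w.2 i); case: (w.2 (w.1 i)); lia.
Qed.

Lemma wexc_sum : wexc w = (\sum_(i < n) is_wexc w i)%N.
Proof. by rewrite /wexc -sum1_card big_mkcond; apply: eq_bigr => i _; rewrite inE. Qed.

Lemma wexc_le : (wexc w <= n)%N.
Proof. by rewrite /wexc -[X in (_ <= X)%N]card_ord max_card. Qed.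

Lemma aexcE : aexc w = (n - wexc w)%N.
Proof.
rewrite /aexc /wexc; have -> : [set i | is_aexc w i] = ~: [set i | is_wexc w i].
  by apply/setP => i; rewrite !inE is_aexcE.
by rewrite cardsCs setCK card_ord.
Qed.

Lemma cyc_le : (cyc w <= n)%N.
Proof. by rewrite /cyc /porbits (leq_trans (leq_imset_card _ _)) ?card_ord. Qed.

End Excedances.

Lemma wexc_sum_lift n (v : signed_perm n.+1) :
  wexc v = (\sum_(j < n) is_wexc v (lift ord_max j) + is_wexc v ord_max)%N.
Proof.
rewrite wexc_sum big_ord_recr /=; congr (_ + _)%N.
apply: eq_bigr => j _; congr (nat_of_bool (is_wexc _ _)).
by apply/val_inj; exact/esym/lift_max.
Qed.

Lemma card_signed_perm n : #|signed_perm n| = (n`! * 2 ^ n)%N.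
Proof. by rewrite card_prod card_Sn card_ffun card_bool card_ord. Qed.

Section Insertion.
Variable n : nat.
Implicit Types (w : signed_perm n) (s : {perm 'I_n}) (o : option 'I_n) (b : bool).

Definition ext_perm s : {perm 'I_n.+1} := lift_perm ord_max ord_max s.

Definition sp_ext w b : signed_perm n.+1 :=
  (ext_perm w.1, [ffun x => oapp w.2 b (unlift ord_max x)]).

Definition insert_pos o : 'I_n.+1 := oapp (lift ord_max) ord_max o.

(* [sp_insert w (Some i) b] sets w(i) = +-(n+1), with sign [b], and gives n+1
   the old value w(i), so that n+1 follows i in its cycle; [sp_insert w None b]
   adds the fixed point +-(n+1). *)
Definition sp_insert w o b : signed_perm n.+1 :=
  let t := tperm (insert_pos o) ord_max in
  ((t * (sp_ext w b).1)%g, [ffun x => (sp_ext w b).2 (t x)]).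

Lemma lift_max_neq (j : 'I_n) : (lift ord_max j == ord_max) = false.
Proof. by apply/negbTE; rewrite eq_sym neq_lift. Qed.

Lemma ext_perm_inj : injective ext_perm.
Proof.
move=> s1 s2 eq_s; apply/permP => j.
have := congr1 (fun p : {perm _} => p (lift ord_max j)) eq_s.
by rewrite /ext_perm !lift_perm_lift => /lift_inj.
Qed.

Lemma insert_pos_inj : injective insert_pos.
Proof.
case=> [i|] [j|] //= => [/lift_inj -> // | /eqP | /eqP].
  by rewrite lift_max_neq.
by rewrite eq_sym lift_max_neq.
Qed.

Lemma sp_insert_pos w o b : (sp_insert w o b).1 (insert_pos o) = ord_max.
Proof. by rewrite permM tpermL /ext_perm lift_perm_id. Qed.

Lemma sp_insert_inj :
  injective (fun x : signed_perm n * option 'I_n * bool => sp_insert x.1.1 x.1.2 x.2).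
Proof.
move=> [[w1 o1] b1] [[w2 o2] b2] /= eq12.
have eq_o : o1 = o2.
  apply: insert_pos_inj; apply: (@perm_inj _ (sp_insert w1 o1 b1).1).
  by rewrite sp_insert_pos eq12 sp_insert_pos.
subst o2; case: eq12 => /mulgI/ext_perm_inj eq_s /ffunP eq_e.
have eq_ext x : oapp w1.2 b1 (unlift ord_max x) = oapp w2.2 b2 (unlift ord_max x).
  by have := eq_e (tperm (insert_pos o1) ord_max x); rewrite !ffunE tpermK.
have eq_b := eq_ext ord_max; rewrite unlift_none /= in eq_b.
have eq_sign : w1.2 = w2.2.
  by apply/ffunP => j; have := eq_ext (lift ord_max j); rewrite liftK.
by case: w1 w2 {eq_e eq_ext} eq_s eq_sign eq_b => [s1 e1] [s2 e2] /= -> -> ->.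
Qed.

Lemma sp_insert_bij :
  bijective (fun x : signed_perm n * option 'I_n * bool => sp_insert x.1.1 x.1.2 x.2).
Proof.
apply: inj_card_bij sp_insert_inj _.
rewrite !card_prod card_option card_bool !card_Sn !card_ffun card_bool !card_ord.
by rewrite factS expnS; nia.
Qed.

Lemma ext_permX s m j :
  (ext_perm s ^+ m)%g (lift ord_max j) = lift ord_max ((s ^+ m)%g j).
Proof. by rewrite !permX; elim: m => //= m ->; rewrite lift_perm_lift. Qed.

Lemma porbit_ext_lift s j :
  porbit (ext_perm s) (lift ord_max j) = lift ord_max @: porbit s j.
Proof.
apply/setP => y; apply/porbitP/imsetP.
  by case=> m ->; exists ((s ^+ m)%g j); rewrite ?mem_porbit // ext_permX.
by case=> z /porbitP [m ->] ->; exists m; rewrite ext_permX.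
Qed.

Lemma porbit_ext_max s : porbit (ext_perm s) ord_max = [set ord_max].
Proof.
apply/setP => y; rewrite inE; apply/porbitP/eqP.
  by case=> m ->; rewrite permX_fix // lift_perm_id.
by move=> ->; exists 0%N; rewrite expg0 perm1.
Qed.

Lemma card_porbits_ext s : #|porbits (ext_perm s)| = #|porbits s|.+1.
Proof.
pose liftS (A : {set 'I_n}) := lift ord_max @: A.
have -> : porbits (ext_perm s) = [set ord_max] |: liftS @: porbits s.
  apply/setP => A; rewrite !inE; apply/imsetP/orP.
    case=> x _ ->; case: (unliftP ord_max x) => [j|] ->.
      by right; rewrite porbit_ext_lift; apply/imset_f/imset_f.
    by left; rewrite porbit_ext_max.
  case=> [/eqP ->|/imsetP [B /imsetP [j _ ->] ->]].
    by exists ord_max; rewrite ?porbit_ext_max.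
  by exists (lift ord_max j); rewrite ?porbit_ext_lift.
rewrite cardsU1 card_imset; last exact/imset_inj/lift_inj.
suff /negbTE -> : [set ord_max] \notin liftS @: porbits s by [].
apply/imsetP => -[B _ /setP/(_ ord_max)].
by rewrite !inE eqxx => /esym/imsetP [j _ /eqP]; rewrite eq_sym lift_max_neq.
Qed.

(* n+1 is fixed by [ext_perm w.1], so the transposition merges its cycle into
   that of the insertion position, unless that position is n+1 itself. *)
Lemma cyc_insert w o b : cyc (sp_insert w o b) = (cyc w + (o == None))%N.
Proof.
have := porbits_mul_tperm (ext_perm w.1) (insert_pos o) ord_max.
rewrite /cyc /= porbit_ext_max inE card_porbits_ext.
case: o => [i|] /=; rewrite ?lift_max_neq ?eqxx -muln2 ?mul1n !addn0 ?addn1 ?addn2 //.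
by case.
Qed.
End Insertion.

Section InsertionExcedances.
Variables (n : nat) (w : signed_perm n) (b : bool).

Lemma sp_val_ext_lift (j : 'I_n) : sp_val (sp_ext w b) (lift ord_max j) = sp_val w j.
Proof. by rewrite /sp_val /= ffunE liftK lift_perm_lift lift_max. Qed.

Lemma sp_val_ext_max : sp_val (sp_ext w b) ord_max = if b then - n.+1%:Z else n.+1%:Z.
Proof. by rewrite /sp_val /= ffunE unlift_none lift_perm_id. Qed.

Lemma is_wexc_ext_lift (j : 'I_n) : is_wexc (sp_ext w b) (lift ord_max j) = is_wexc w j.
Proof. by rewrite /is_wexc lift_perm_lift !sp_val_ext_lift lift_max. Qed.

Lemma is_wexc_ext_max : is_wexc (sp_ext w b) ord_max = ~~ b.
Proof. by rewrite /is_wexc /= lift_perm_id sp_val_ext_max; case: b; lia. Qed.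

Lemma wexc_ext : wexc (sp_ext w b) = (wexc w + ~~ b)%N.
Proof.
rewrite wexc_sum_lift wexc_sum is_wexc_ext_max; congr (_ + _)%N.
by apply: eq_bigr => j _; rewrite is_wexc_ext_lift.
Qed.

Lemma sp_insert_None : sp_insert w None b = sp_ext w b.
Proof.
rewrite /sp_insert /= tperm1 mul1g; congr (_, _).
by apply/ffunP => x; rewrite !ffunE perm1.
Qed.
End InsertionExcedances.

Section InsertionAfter.
Variables (n : nat) (w : signed_perm n) (i : 'I_n) (b : bool).
Let w' := sp_insert w (Some i) b.
Let t := tperm (lift ord_max i) ord_max.

Lemma tperm_lift_neq (j : 'I_n) : j != i -> t (lift ord_max j) = lift ord_max j.
Proof.
by move=> ne_ji; rewrite tpermD // ?neq_lift // (inj_eq lift_inj) eq_sym.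
Qed.

Lemma sp_insert_perm x : w'.1 x = ext_perm w.1 (t x).
Proof. exact: permM. Qed.

Lemma sp_val_insert x : sp_val w' x = sp_val (sp_ext w b) (t x).
Proof. by rewrite /sp_val /= ffunE permM. Qed.

Lemma is_wexc_insert_lift (j : 'I_n) : j != i -> w.1 j != i ->
  is_wexc w' (lift ord_max j) = is_wexc w j.
Proof.
move=> ne_ji ne_wji; rewrite /is_wexc sp_insert_perm !sp_val_insert.
by rewrite !tperm_lift_neq // lift_perm_lift tperm_lift_neq // !sp_val_ext_lift lift_max.
Qed.

Lemma is_wexc_insert_pos : is_wexc w' (lift ord_max i) = b.
Proof.
rewrite /is_wexc sp_insert_perm !sp_val_insert tpermL lift_perm_id tpermR.
rewrite sp_val_ext_max sp_val_ext_lift lift_max.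
by have := sp_val_pm w i; have := ltn_ord (w.1 i); have := ltn_ord i; case: b; lia.
Qed.

Lemma is_wexc_insert_pred (j : 'I_n) : j != i -> w.1 j = i ->
  is_wexc w' (lift ord_max j) = ~~ b.
Proof.
move=> ne_ji wj; rewrite /is_wexc sp_insert_perm !sp_val_insert tperm_lift_neq //.
rewrite lift_perm_lift wj tpermL sp_val_ext_max sp_val_ext_lift lift_max.
have := sp_val_pm w j; rewrite wj; have := ltn_ord i.
by move: ne_ji; rewrite -(inj_eq val_inj) /=; case: b; lia.
Qed.

Lemma is_wexc_insert_max : w.1 i != i -> is_wexc w' ord_max = is_wexc w i.
Proof.
move=> ne_wii; rewrite /is_wexc sp_insert_perm !sp_val_insert tpermR lift_perm_lift.
rewrite tperm_lift_neq // !sp_val_ext_lift.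
have := sp_val_pm w i; have := ltn_ord (w.1 i).
by move: ne_wii; rewrite -(inj_eq val_inj) /=; lia.
Qed.

Lemma is_wexc_insert_max_fixed : w.1 i = i -> is_wexc w' ord_max = ~~ b.
Proof.
move=> wii; rewrite /is_wexc sp_insert_perm !sp_val_insert tpermR lift_perm_lift wii.
rewrite tpermL sp_val_ext_max sp_val_ext_lift.
by have := sp_val_pm w i; rewrite wii /=; have := ltn_ord i; case: b; lia.
Qed.

(* Along the cycle, +-(n+1) now sits between w(j0) and w(i), where
   |w(j0)| = i: the comparison made at j0 is replaced by those made at j0 and
   at i, exactly one of which is a weak excedance, and the comparison formerly
   made at i moves to n+1. *)
Lemma wexc_insert_after : (wexc w' + is_wexc w ((w.1)^-1 i)%g = wexc w + 1)%N.
Proof.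
set j0 := ((w.1)^-1 i)%g; have wj0 : w.1 j0 = i by rewrite permKV.
have pred_j0 j : w.1 j = i -> j = j0 by move=> wji; rewrite /j0 -wji permK.
rewrite wexc_sum_lift wexc_sum (bigD1 i) //= is_wexc_insert_pos [in RHS](bigD1 i) //=.
have [j0i|ne_j0i] := eqVneq j0 i.
  have not_pred j : j != i -> w.1 j != i.
    by move=> ne_ji; apply: contra ne_ji => /eqP/pred_j0 ->; rewrite j0i.
  under eq_bigr => j ne_ji do rewrite (is_wexc_insert_lift ne_ji (not_pred j ne_ji)).
  rewrite is_wexc_insert_max_fixed; last by rewrite -{1}j0i.
  by rewrite j0i; case: b; case: (is_wexc w i) => /=; lia.
have ne_wii : w.1 i != i by apply: contra ne_j0i => /eqP/pred_j0 <-.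
rewrite is_wexc_insert_max // (bigD1 j0 ne_j0i) [in RHS](bigD1 j0 ne_j0i) /=.
have not_pred j : j != j0 -> w.1 j != i by apply: contra => /eqP/pred_j0 ->.
under eq_bigr => j /andP [ne_ji ne_jj0]
  do rewrite (is_wexc_insert_lift ne_ji (not_pred j ne_jj0)).
rewrite is_wexc_insert_pred //.
by case: b; case: (is_wexc w i); case: (is_wexc w j0) => /=; lia.
Qed.
End InsertionAfter.

Section Weight.
Variables (T : comRingType) (x y q : T).

Definition sp_weight n (w : signed_perm n) : T :=
  x ^+ wexc w * y ^+ aexc w * q ^+ (n - cyc w).

Lemma sum_wexc_aexc n (w : signed_perm n) :
  \sum_(j < n) (if is_wexc w j then y else x) = y *+ wexc w + x *+ aexc w.
Proof.
rewrite (bigID (is_wexc w)) /= (eq_bigr (fun=> y)) => [|j -> //].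
rewrite [X in _ + X](eq_bigr (fun=> x)) => [|j /negbTE -> //].
rewrite !sumr_const /wexc /aexc; congr (_ *+ _ + _ *+ _).
  by apply: eq_card => j; rewrite inE.
by apply: eq_card => j; rewrite inE is_aexcE.
Qed.

Lemma sp_weight_ext n (w : signed_perm n) b :
  sp_weight (sp_ext w b) = sp_weight w * (if b then y else x).
Proof.
rewrite /sp_weight !aexcE wexc_ext -sp_insert_None cyc_insert addn1 subSS.
have := wexc_le w; case: b => /= le_wn.
  by rewrite addn0 subSn // exprS [y * _]mulrC mulrA mulrAC.
by rewrite addn1 subSS exprS -!mulrA mulrC !mulrA.
Qed.

Lemma sp_weight_insert_after n (w : signed_perm n) i b :
  sp_weight (sp_insert w (Some i) b) =
  sp_weight w * q * (if is_wexc w ((w.1)^-1 i)%g then y else x).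
Proof.
have := wexc_insert_after w i b.
rewrite /sp_weight !aexcE cyc_insert addn0 (subSn (cyc_le w)) exprS.
move: (wexc (sp_insert w (Some i) b)) => W.
have := wexc_le w; case: (is_wexc w _) => /= le_wn eq_W.
  rewrite (_ : W = wexc w); last by lia.
  by rewrite subSn // exprS; move: (x ^+ _) (y ^+ _) (q ^+ _) => a c d; ring.
rewrite (_ : W = (wexc w).+1); last by lia.
by rewrite subSS exprS; move: (x ^+ _) (y ^+ _) (q ^+ _) => a c d; ring.
Qed.

Lemma sum_sp_weightS n :
  \sum_(v : signed_perm n.+1) sp_weight v =
  \sum_(w : signed_perm n) sp_weight w * (x + y + q *+ 2 * (y *+ wexc w + x *+ aexc w)).
Proof.
rewrite (reindex _ (onW_bij _ (@sp_insert_bij n))) 2![LHS]sum_pair /=.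
apply: eq_bigr => w _; rewrite sum_option !big_bool /= !sp_insert_None !sp_weight_ext.
under eq_bigr => i _ do rewrite big_bool !sp_weight_insert_after.
rewrite big_split -!mulr_sumr (reindex_inj (@perm_inj _ w.1)) /=.
under eq_bigr => j _ do rewrite permK.
by rewrite sum_wexc_aexc; move: (sp_weight w) (y *+ _ + _) => a S; ring.
Qed.

Lemma sum_sp_weight0 : \sum_(w : signed_perm 0) sp_weight w = 1.
Proof.
rewrite (eq_bigr (fun=> 1)) ?sumr_const ?card_signed_perm // => w _.
have := wexc_le w; have := cyc_le w; rewrite !leqn0 /sp_weight aexcE => /eqP-> /eqP->.
by rewrite !expr0 !mulr1.
Qed.
End Weight.

Section Derivation.
Variables (R : comRingType) (D : {mpoly R[3]} -> {mpoly R[3]}).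
Hypothesis derD : is_derivation D.

Lemma derivation0 : D 0 = 0.
Proof. by case: derD => _ DZ _ _; rewrite -[0 in LHS](scale0r 0) DZ scale0r. Qed.

Lemma derivation_sum (I : finType) (F : I -> {mpoly R[3]}) :
  D (\sum_i F i) = \sum_i D (F i).
Proof. by case: derD => DD _ _ _; exact: (big_morph D DD derivation0). Qed.

Lemma logderivM p p' r r' : D p = p * r -> D p' = p' * r' ->
  D (p * p') = p * p' * (r + r').
Proof.
by case: derD => _ _ DM _ Dp Dp'; rewrite DM Dp Dp' mulrDr mulrAC mulrA.
Qed.

Lemma logderivX p r m : D p = p * r -> D (p ^+ m) = p ^+ m * (r *+ m).
Proof.
move=> Dp; elim: m => [|m IHm].
  by case: derD => _ _ _ DC; rewrite expr0 mulr0n mulr0 -mpolyC1 DC.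
by rewrite exprS (logderivM Dp IHm) mulrS.
Qed.

Lemma derivation_sp_weight (k : R) n (w : signed_perm n) :
  D 'X_(1 : 'I_3) = 'X_1 * (k%:MP *+ 2 * 'X_2) ->
  D 'X_(2 : 'I_3) = 'X_2 * (k%:MP *+ 2 * 'X_1) ->
  D (sp_weight 'X_1 'X_2 k%:MP w) =
  sp_weight 'X_1 'X_2 k%:MP w * (k%:MP *+ 2 * ('X_2 *+ wexc w + 'X_1 *+ aexc w)).
Proof.
move=> DX1 DX2; have Dk : D (k%:MP ^+ (n - cyc w)) = k%:MP ^+ (n - cyc w) * 0.
  by case: derD => _ _ _ DC; rewrite mulr0 -rmorphXn DC.
rewrite (logderivM (logderivM (logderivX _ DX1)
  (logderivX _ DX2)) Dk).
by rewrite addr0 -!mulrnAr -mulrDr.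
Qed.
End Derivation.

Theorem lemma3 (R : comRingType) (k : R) (D : {mpoly R[3]} -> {mpoly R[3]}) :
  is_derivation D ->
  D 'X_(0 : 'I_3) = 'X_(0 : 'I_3) * ('X_(1 : 'I_3) + 'X_(2 : 'I_3)) ->
  D 'X_(1 : 'I_3) = (2 * k)%:MP * 'X_(1 : 'I_3) * 'X_(2 : 'I_3) ->
  D 'X_(2 : 'I_3) = (2 * k)%:MP * 'X_(1 : 'I_3) * 'X_(2 : 'I_3) ->
  forall n : nat, (0 < n)%N ->
    iter n D 'X_(0 : 'I_3) =
      'X_(0 : 'I_3) *
        \sum_(w : signed_perm n)
           'X_(1 : 'I_3) ^+ wexc w * 'X_(2 : 'I_3) ^+ aexc w
             * k%:MP ^+ (n - cyc w).
Proof.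
move=> derD DX0 DX1 DX2 n _.
have two_k : (2 * k)%:MP = k%:MP *+ 2 :> {mpoly R[3]} by rewrite mulr_natl mpolyCMn.
have DX1' : D 'X_(1 : 'I_3) = 'X_1 * (k%:MP *+ 2 * 'X_2).
  by rewrite DX1 two_k mulrAC mulrC.
have DX2' : D 'X_(2 : 'I_3) = 'X_2 * (k%:MP *+ 2 * 'X_1) by rewrite DX2 two_k mulrC.
elim: n => [|n IHn]; first by rewrite sum_sp_weight0 mulr1.
have [_ _ DM _] := derD.
rewrite iterS IHn DM DX0 (derivation_sum derD) sum_sp_weightS -mulrA -mulrDr mulr_sumr.
rewrite -big_split /=; congr (_ * _); apply: eq_bigr => w _.
by rewrite (derivation_sp_weight derD w DX1' DX2') mulrC -mulrDr.
Qed.
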